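(* Let $y_A\colon A\to\hat A$ be a yoneda embedding in a double category $\mathcal K$. If a cell $\eta$ with horizontal source $J\colon A\nrightarrow B$, vertical sides $y_A$ and $l\colon B\to\hat A$, and horizontal target $1_{\hat A}$ defines $l$ as the left Kan extension of $y_A$ along $J$, then $\eta$ is cartesian and, moreover, it defines $l$ as the pointwise left Kan extension of $y_A$ along $J$.
   Context: Double categories: a double category has objects, vertical morphisms (composition $\circ$), horizontal morphisms $J\colon A\nrightarrow B$ (composition $\odot$ in diagrammatic order, units $1_A$) and cells with horizontal source $J\colon A\nrightarrow B$, horizontal target $K\colon C\nrightarrow D$, vertical sides $f\colon A\to C$, $g\colon B\to D$. Vertical cells are cells whose horizontal source and target are units. A cell $\phi\colon J\Rightarrow K$ with sides $f,g$ is cartesian if every cell $H\Rightarrow K$ with sides $f\circ h,g\circ k$ factors uniquely through $\phi$ via a cell $H\Rightarrow J$ with sides $h,k$. Kan extensions: a cell $\eta$ with horizontal source $J\colon A\nrightarrow B$, vertical sides $d\colon A\to M$, $l\colon B\to M$ and target $1_M$ defines $l$ as the left Kan extension of $d$ along $J$ if every cell with source $J$, sides $d,k$ and target $1_M$ factors uniquely as $\eta$ horizontally composed with a vertical cell $l\Rightarrow k$; pointwise if moreover for every $H\colon B\nrightarrow C$ every cell with horizontal source $J\odot H$, sides $d$ and $k\colon C\to M$ and target $1_M$ factors uniquely as $\eta\odot\psi$ with $\psi\colon H\Rightarrow 1_M$ having sides $l,k$. Yoneda embedding: a vertical morphism $y_A\colon A\to\hat A$ such that (c) for every $J\colon A\nrightarrow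 B$ there exists a cartesian cell $J\Rightarrow 1_{\hat A}$ with vertical sides $y_A$ and some $g\colon B\to\hat A$; and (e) every cartesian cell $J\Rightarrow 1_{\hat A}$ with vertical sides $y_A,l$ defines $l$ as the pointwise left Kan extension of $y_A$ along $J$. *)

(* Plain Rocq (no library needed): pseudo double categories, presented
   "essentially algebraically" (non-dependent sorts with source/target maps),
   to avoid transport along equalities of vertical composites. *)

Record DoubleCat := {
  Ob : Type;
  Vm : Type;
  Hm : Type;
  Cell : Type;

  vdom : Vm -> Ob;
  vcod : Vm -> Ob;
  vid : Ob -> Vm;
  vcomp : Vm -> Vm -> Vm;  (* vcomp g f = g o f *)
  vdom_id : forall A, vdom (vid A) = A;
  vcod_id : forall A, vcod (vid A) = A;
  vdom_comp : forall f g, vcod f = vdom g -> vdom (vcomp g f) = vdom f;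
  vcod_comp : forall f g, vcod f = vdom g -> vcod (vcomp g f) = vcod g;
  vcomp_id_l : forall f, vcomp (vid (vcod f)) f = f;
  vcomp_id_r : forall f, vcomp f (vid (vdom f)) = f;
  vcomp_assoc : forall f g h, vcod f = vdom g -> vcod g = vdom h ->
      vcomp h (vcomp g f) = vcomp (vcomp h g) f;

  hsrc : Hm -> Ob;
  htgt : Hm -> Ob;
  hu : Ob -> Hm;
  hc : Hm -> Hm -> Hm;      (* hc J K = J (.) K, diagrammatic order *)
  hsrc_u : forall A, hsrc (hu A) = A;
  htgt_u : forall A, htgt (hu A) = A;
  hsrc_c : forall J K, htgt J = hsrc K -> hsrc (hc J K) = hsrc J;
  htgt_c : forall J K, htgt J = hsrc K -> htgt (hc J K) = htgt K;

  (* cells: horizontal source csrc, horizontal target ctgt,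
     vertical sides cl (left) and cr (right) *)
  csrc : Cell -> Hm;
  ctgt : Cell -> Hm;
  cl : Cell -> Vm;
  cr : Cell -> Vm;
  vdom_cl : forall a, vdom (cl a) = hsrc (csrc a);
  vcod_cl : forall a, vcod (cl a) = hsrc (ctgt a);
  vdom_cr : forall a, vdom (cr a) = htgt (csrc a);
  vcod_cr : forall a, vcod (cr a) = htgt (ctgt a);

  (* vertical composition of cells: cv b a = b o a (first a, then b) *)
  cv : Cell -> Cell -> Cell;
  csrc_cv : forall a b, ctgt a = csrc b -> csrc (cv b a) = csrc a;
  ctgt_cv : forall a b, ctgt a = csrc b -> ctgt (cv b a) = ctgt b;
  cl_cv : forall a b, ctgt a = csrc b -> cl (cv b a) = vcomp (cl b) (cl a);
  cr_cv : forall a b, ctgt a = csrc b -> cr (cv b a) = vcomp (cr b) (cr a);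
  cid : Hm -> Cell;
  csrc_cid : forall J, csrc (cid J) = J;
  ctgt_cid : forall J, ctgt (cid J) = J;
  cl_cid : forall J, cl (cid J) = vid (hsrc J);
  cr_cid : forall J, cr (cid J) = vid (htgt J);
  cv_id_l : forall a, cv (cid (ctgt a)) a = a;
  cv_id_r : forall a, cv a (cid (csrc a)) = a;
  cv_assoc : forall a b c, ctgt a = csrc b -> ctgt b = csrc c ->
      cv c (cv b a) = cv (cv c b) a;

  ch : Cell -> Cell -> Cell;
  csrc_ch : forall a b, cr a = cl b -> csrc (ch a b) = hc (csrc a) (csrc b);
  ctgt_ch : forall a b, cr a = cl b -> ctgt (ch a b) = hc (ctgt a) (ctgt b);
  cl_ch : forall a b, cr a = cl b -> cl (ch a b) = cl a;
  cr_ch : forall a b, cr a = cl b -> cr (ch a b) = cr b;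
  cu : Vm -> Cell;
  csrc_cu : forall f, csrc (cu f) = hu (vdom f);
  ctgt_cu : forall f, ctgt (cu f) = hu (vcod f);
  cl_cu : forall f, cl (cu f) = f;
  cr_cu : forall f, cr (cu f) = f;
  cu_id : forall A, cu (vid A) = cid (hu A);
  cu_comp : forall f g, vcod f = vdom g -> cu (vcomp g f) = cv (cu g) (cu f);
  ch_cid : forall J K, htgt J = hsrc K -> ch (cid J) (cid K) = cid (hc J K);
  interchange : forall a a' b b',
      cr a = cl b -> cr a' = cl b' -> ctgt a = csrc a' -> ctgt b = csrc b' ->
      ch (cv a' a) (cv b' b) = cv (ch a' b') (ch a b);

  assoc : Hm -> Hm -> Hm -> Cell;
  assoc_inv : Hm -> Hm -> Hm -> Cell;
  csrc_assoc : forall J K L, htgt J = hsrc K -> htgt K = hsrc L ->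
      csrc (assoc J K L) = hc (hc J K) L;
  ctgt_assoc : forall J K L, htgt J = hsrc K -> htgt K = hsrc L ->
      ctgt (assoc J K L) = hc J (hc K L);
  cl_assoc : forall J K L, htgt J = hsrc K -> htgt K = hsrc L ->
      cl (assoc J K L) = vid (hsrc J);
  cr_assoc : forall J K L, htgt J = hsrc K -> htgt K = hsrc L ->
      cr (assoc J K L) = vid (htgt L);
  csrc_assoc_inv : forall J K L, htgt J = hsrc K -> htgt K = hsrc L ->
      csrc (assoc_inv J K L) = hc J (hc K L);
  ctgt_assoc_inv : forall J K L, htgt J = hsrc K -> htgt K = hsrc L ->
      ctgt (assoc_inv J K L) = hc (hc J K) L;
  cl_assoc_inv : forall J K L, htgt J = hsrc K -> htgt K = hsrc L ->
      cl (assoc_inv J K L) = vid (hsrc J);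
  cr_assoc_inv : forall J K L, htgt J = hsrc K -> htgt K = hsrc L ->
      cr (assoc_inv J K L) = vid (htgt L);
  assoc_inv_assoc : forall J K L, htgt J = hsrc K -> htgt K = hsrc L ->
      cv (assoc_inv J K L) (assoc J K L) = cid (hc (hc J K) L);
  assoc_assoc_inv : forall J K L, htgt J = hsrc K -> htgt K = hsrc L ->
      cv (assoc J K L) (assoc_inv J K L) = cid (hc J (hc K L));
  assoc_nat : forall a b c, cr a = cl b -> cr b = cl c ->
      cv (assoc (ctgt a) (ctgt b) (ctgt c)) (ch (ch a b) c)
      = cv (ch a (ch b c)) (assoc (csrc a) (csrc b) (csrc c));

  lu : Hm -> Cell;
  lu_inv : Hm -> Cell;
  ru : Hm -> Cell;
  ru_inv : Hm -> Cell;
  csrc_lu : forall J, csrc (lu J) = hc (hu (hsrc J)) J;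
  ctgt_lu : forall J, ctgt (lu J) = J;
  cl_lu : forall J, cl (lu J) = vid (hsrc J);
  cr_lu : forall J, cr (lu J) = vid (htgt J);
  csrc_lu_inv : forall J, csrc (lu_inv J) = J;
  ctgt_lu_inv : forall J, ctgt (lu_inv J) = hc (hu (hsrc J)) J;
  cl_lu_inv : forall J, cl (lu_inv J) = vid (hsrc J);
  cr_lu_inv : forall J, cr (lu_inv J) = vid (htgt J);
  lu_inv_lu : forall J, cv (lu_inv J) (lu J) = cid (hc (hu (hsrc J)) J);
  lu_lu_inv : forall J, cv (lu J) (lu_inv J) = cid J;
  csrc_ru : forall J, csrc (ru J) = hc J (hu (htgt J));
  ctgt_ru : forall J, ctgt (ru J) = J;
  cl_ru : forall J, cl (ru J) = vid (hsrc J);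
  cr_ru : forall J, cr (ru J) = vid (htgt J);
  csrc_ru_inv : forall J, csrc (ru_inv J) = J;
  ctgt_ru_inv : forall J, ctgt (ru_inv J) = hc J (hu (htgt J));
  cl_ru_inv : forall J, cl (ru_inv J) = vid (hsrc J);
  cr_ru_inv : forall J, cr (ru_inv J) = vid (htgt J);
  ru_inv_ru : forall J, cv (ru_inv J) (ru J) = cid (hc J (hu (htgt J)));
  ru_ru_inv : forall J, cv (ru J) (ru_inv J) = cid J;
  lu_nat : forall a,
      cv (lu (ctgt a)) (ch (cu (cl a)) a) = cv a (lu (csrc a));
  ru_nat : forall a,
      cv (ru (ctgt a)) (ch a (cu (cr a))) = cv a (ru (csrc a));

  pentagon : forall J K L M,
      htgt J = hsrc K -> htgt K = hsrc L -> htgt L = hsrc M ->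
      cv (assoc J K (hc L M)) (assoc (hc J K) L M)
      = cv (ch (cid J) (assoc K L M))
           (cv (assoc J (hc K L) M) (ch (assoc J K L) (cid M)));
  triangle : forall J K, htgt J = hsrc K ->
      cv (ch (cid J) (lu K)) (assoc J (hu (htgt J)) K) = ch (ru J) (cid K)
}.

Arguments vdom {_}. Arguments vcod {_}. Arguments vid {_}. Arguments vcomp {_}.
Arguments hsrc {_}. Arguments htgt {_}. Arguments hu {_}. Arguments hc {_}.
Arguments csrc {_}. Arguments ctgt {_}. Arguments cl {_}. Arguments cr {_}.
Arguments cv {_}. Arguments cid {_}. Arguments ch {_}. Arguments cu {_}.
Arguments assoc {_}. Arguments assoc_inv {_}.
Arguments lu {_}. Arguments lu_inv {_}. Arguments ru {_}. Arguments ru_inv {_}.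

Section Notions.
Variable D : DoubleCat.

Definition cell_shape (a : Cell D) (J K : Hm D) (f g : Vm D) : Prop :=
  csrc a = J /\ ctgt a = K /\ cl a = f /\ cr a = g.

Definition cartesian (phi : Cell D) : Prop :=
  forall (chi : Cell D) (h k : Vm D),
    vcod h = vdom (cl phi) -> vcod k = vdom (cr phi) ->
    ctgt chi = ctgt phi ->
    cl chi = vcomp (cl phi) h -> cr chi = vcomp (cr phi) k ->
    exists! psi : Cell D,
      cell_shape psi (csrc chi) (csrc phi) h k /\ cv phi psi = chi.

Definition hcomp_into_unit (M : Ob D) (eta psi : Cell D) : Cell D :=
  cv (lu (hu M)) (ch eta psi).

(** The composite of eta with a
    vertical cell nu : l => k is  J ~ J (.) 1_B => 1_M (.) 1_M ~ 1_M. *)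
Definition left_kan (d : Vm D) (J : Hm D) (l : Vm D) (eta : Cell D) : Prop :=
  cell_shape eta J (hu (vcod d)) d l /\
  forall (k : Vm D) (chi : Cell D),
    cell_shape chi J (hu (vcod d)) d k ->
    exists! nu : Cell D,
      cell_shape nu (hu (htgt J)) (hu (vcod d)) l k /\
      chi = cv (hcomp_into_unit (vcod d) eta nu) (ru_inv J).

Definition pointwise_left_kan (d : Vm D) (J : Hm D) (l : Vm D) (eta : Cell D)
  : Prop :=
  cell_shape eta J (hu (vcod d)) d l /\
  forall (H : Hm D) (k : Vm D) (chi : Cell D),
    hsrc H = htgt J ->
    cell_shape chi (hc J H) (hu (vcod d)) d k ->
    exists! psi : Cell D,
      cell_shape psi H (hu (vcod d)) l k /\
      chi = hcomp_into_unit (vcod d) eta psi.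

Definition yoneda_embedding (y : Vm D) : Prop :=
  (forall J : Hm D, hsrc J = vdom y ->
     exists (g : Vm D) (phi : Cell D),
       cell_shape phi J (hu (vcod y)) y g /\ cartesian phi) /\
  (forall (J : Hm D) (l : Vm D) (phi : Cell D),
     cell_shape phi J (hu (vcod y)) y l -> cartesian phi ->
     pointwise_left_kan y J l phi).

End Notions.

Arguments cell_shape {D}. Arguments cartesian {_}. Arguments hcomp_into_unit {_}.
Arguments left_kan {_}. Arguments pointwise_left_kan {_}.
Arguments yoneda_embedding {_}.


(* By axiom (c) there is a cartesian cell phi : J => 1 with sides y_A and some g, and by (e) it is a
   pointwise left Kan extension.  The universal properties of eta and of phi (the latter along 1_B)
   give vertical cells nu : l => g and mu : g => l with phi = eta.nu and eta = phi.mu; uniqueness in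
   the Kan property of eta forces mu o nu = 1_l.  Thus eta is a retract of the cartesian cell phi,
   hence cartesian, and (e) makes it pointwise. *)

Section VerticalIdentities.
Variable D : DoubleCat.

Lemma vcomp_vid_l (f : Vm D) A : vcod f = A -> vcomp (vid A) f = f.
Proof. intros <-; apply vcomp_id_l. Qed.

Lemma vcomp_vid_r (f : Vm D) A : vdom f = A -> vcomp f (vid A) = f.
Proof. intros <-; apply vcomp_id_r. Qed.

End VerticalIdentities.

(* The presentation is non-dependent, so every composite comes with equations between boundaries;
   [side] proves them by normalising boundaries with the structure equations and hypotheses. *)
Ltac rw_hyps :=
  match goal with
  | H : csrc ?a = _ |- context [csrc ?a] => is_var a; rewrite H
  | H : ctgt ?a = _ |- context [ctgt ?a] => is_var a; rewrite H
  | H : cl ?a = _ |- context [cl ?a] => is_var a; rewrite H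
  | H : cr ?a = _ |- context [cr ?a] => is_var a; rewrite H
  end.

Ltac simp_step := first
  [ rewrite csrc_cid | rewrite ctgt_cid | rewrite cl_cid | rewrite cr_cid
  | rewrite csrc_cu | rewrite ctgt_cu | rewrite cl_cu | rewrite cr_cu
  | rewrite csrc_lu | rewrite ctgt_lu | rewrite cl_lu | rewrite cr_lu
  | rewrite csrc_lu_inv | rewrite ctgt_lu_inv | rewrite cl_lu_inv | rewrite cr_lu_inv
  | rewrite csrc_ru | rewrite ctgt_ru | rewrite cl_ru | rewrite cr_ru
  | rewrite csrc_ru_inv | rewrite ctgt_ru_inv | rewrite cl_ru_inv | rewrite cr_ru_inv
  | rewrite hsrc_u | rewrite htgt_u | rewrite vdom_id | rewrite vcod_id
  | rewrite vdom_cl | rewrite vcod_cl | rewrite vdom_cr | rewrite vcod_cr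
  | rw_hyps
  | rewrite csrc_cv by side | rewrite ctgt_cv by side
  | rewrite cl_cv by side | rewrite cr_cv by side
  | rewrite csrc_ch by side | rewrite ctgt_ch by side
  | rewrite cl_ch by side | rewrite cr_ch by side
  | rewrite csrc_assoc by side | rewrite ctgt_assoc by side
  | rewrite cl_assoc by side | rewrite cr_assoc by side
  | rewrite csrc_assoc_inv by side | rewrite ctgt_assoc_inv by side
  | rewrite cl_assoc_inv by side | rewrite cr_assoc_inv by side
  | rewrite hsrc_c by side | rewrite htgt_c by side
  | rewrite vdom_comp by side | rewrite vcod_comp by side
  | rewrite vcomp_vid_l by side | rewrite vcomp_vid_r by side ]
with side := repeat simp_step; first [reflexivity | congruence].

Section CellCalculus.
Variable D : DoubleCat.

Lemma cv_cid_l (a : Cell D) X : ctgt a = X -> cv (cid X) a = a.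
Proof. intros <-; apply cv_id_l. Qed.

Lemma cv_cid_r (a : Cell D) X : csrc a = X -> cv a (cid X) = a.
Proof. intros <-; apply cv_id_r. Qed.

Lemma cv_cid_cid (X : Hm D) : cv (cid X) (cid X) = cid X.
Proof. apply cv_cid_l, ctgt_cid. Qed.

Lemma ch_cv_r (a b b' : Cell D) :
  cr a = cl b -> vid (htgt (ctgt a)) = cl b' -> ctgt b = csrc b' ->
  ch a (cv b' b) = cv (ch (cid (ctgt a)) b') (ch a b).
Proof. intros H1 H2 H3. rewrite <- interchange by side. rewrite cv_id_l. reflexivity. Qed.

Lemma ch_cv_l (a a' b : Cell D) :
  cr a = cl b -> cr a' = vid (hsrc (ctgt b)) -> ctgt a = csrc a' ->
  ch (cv a' a) b = cv (ch a' (cid (ctgt b))) (ch a b).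
Proof. intros H1 H2 H3. rewrite <- interchange by side. rewrite cv_id_l. reflexivity. Qed.

Lemma cv_section_cancel (X Y E E' : Cell D) :
  csrc X = ctgt E -> csrc Y = ctgt E -> ctgt E' = csrc E ->
  cv E E' = cid (ctgt E) -> cv X E = cv Y E -> X = Y.
Proof.
  intros H1 H2 H3 H4 H5.
  rewrite <- (cv_id_r D X), <- (cv_id_r D Y), H1, H2, <- H4.
  rewrite !cv_assoc by side. rewrite H5. reflexivity.
Qed.

Lemma cv_retraction_cancel (X Y E E' : Cell D) :
  ctgt X = csrc E -> ctgt Y = csrc E -> ctgt E = csrc E' ->
  cv E' E = cid (csrc E) -> cv E X = cv E Y -> X = Y.
Proof.
  intros H1 H2 H3 H4 H5.
  rewrite <- (cv_id_l D X), <- (cv_id_l D Y), H1, H2, <- H4.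
  rewrite <- !cv_assoc by side. rewrite H5. reflexivity.
Qed.

Lemma lu_inv_nat (p : Cell D) :
  cv (ch (cu (cl p)) p) (lu_inv (csrc p)) = cv (lu_inv (ctgt p)) p.
Proof.
  apply (cv_retraction_cancel _ _ (lu (ctgt p)) (lu_inv (ctgt p))); try side.
  - rewrite lu_inv_lu, csrc_lu. reflexivity.
  - rewrite cv_assoc by side. rewrite lu_nat. rewrite <- !cv_assoc by side.
    rewrite lu_lu_inv, cv_id_r, cv_assoc by side. rewrite lu_lu_inv, cv_id_l. reflexivity.
Qed.

Lemma ru_inv_nat (p : Cell D) :
  cv (ch p (cu (cr p))) (ru_inv (csrc p)) = cv (ru_inv (ctgt p)) p.
Proof.
  apply (cv_retraction_cancel _ _ (ru (ctgt p)) (ru_inv (ctgt p))); try side.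
  - rewrite ru_inv_ru, csrc_ru. reflexivity.
  - rewrite cv_assoc by side. rewrite ru_nat. rewrite <- !cv_assoc by side.
    rewrite ru_ru_inv, cv_id_r, cv_assoc by side. rewrite ru_ru_inv, cv_id_l. reflexivity.
Qed.

Lemma triangle_inv (X : Hm D) (B : Ob D) : htgt X = B ->
  cv (assoc X (hu B) (hu B)) (ch (ru_inv X) (cid (hu B))) = ch (cid X) (lu_inv (hu B)).
Proof.
  intros HB.
  apply (cv_retraction_cancel _ _ (ch (cid X) (lu (hu B))) (ch (cid X) (lu_inv (hu B))));
    try side.
  - rewrite <- interchange by side. rewrite cv_cid_cid, lu_inv_lu, hsrc_u, ch_cid by side. side.
  - rewrite cv_assoc by side.
    pose proof (triangle D X (hu B)) as Tri. rewrite HB in Tri. rewrite Tri by side.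
    rewrite <- interchange by side. rewrite ru_ru_inv, cv_cid_cid, ch_cid by side.
    rewrite <- interchange by side. rewrite cv_cid_cid, lu_lu_inv, ch_cid by side.
    f_equal; side.
Qed.

End CellCalculus.

Section UnitCoherence.
Variable D : DoubleCat.
Variable M : Ob D.
Local Notation I := (hu M).
Local Notation I2 := (hc (hu M) (hu M)).

Lemma cell_eq_lu_conj (f : Cell D) :
  cl f = vid M -> hsrc (csrc f) = M -> hsrc (ctgt f) = M ->
  f = cv (cv (lu (ctgt f)) (ch (cid I) f)) (lu_inv (csrc f)).
Proof.
  intros Hl H1 H2. rewrite <- cu_id, <- Hl, lu_nat.
  rewrite <- cv_assoc by side. rewrite lu_lu_inv, cv_id_r. reflexivity.
Qed.

Lemma cell_eq_ru_conj (f : Cell D) :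
  cr f = vid M -> htgt (csrc f) = M -> htgt (ctgt f) = M ->
  f = cv (cv (ru (ctgt f)) (ch f (cid I))) (ru_inv (csrc f)).
Proof.
  intros Hr H1 H2. rewrite <- cu_id, <- Hr, ru_nat.
  rewrite <- cv_assoc by side. rewrite ru_ru_inv, cv_id_r. reflexivity.
Qed.

Lemma ch_cid_hu_l_inj (f g : Cell D) :
  cl f = vid M -> cl g = vid M -> csrc f = csrc g -> ctgt f = ctgt g ->
  hsrc (csrc f) = M -> hsrc (ctgt f) = M -> ch (cid I) f = ch (cid I) g -> f = g.
Proof.
  intros Hf Hg H1 H2 H3 H4 H5.
  rewrite (cell_eq_lu_conj f), (cell_eq_lu_conj g) by congruence.
  rewrite H1, H2, H5. reflexivity.
Qed.

Lemma ch_cid_hu_r_inj (f g : Cell D) :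
  cr f = vid M -> cr g = vid M -> csrc f = csrc g -> ctgt f = ctgt g ->
  htgt (csrc f) = M -> htgt (ctgt f) = M -> ch f (cid I) = ch g (cid I) -> f = g.
Proof.
  intros Hf Hg H1 H2 H3 H4 H5.
  rewrite (cell_eq_ru_conj f), (cell_eq_ru_conj g) by congruence.
  rewrite H1, H2, H5. reflexivity.
Qed.

Lemma triangle_hu : cv (ch (cid I) (lu I)) (assoc I I I) = ch (ru I) (cid I).
Proof. pose proof (triangle D I I) as Tri. rewrite htgt_u in Tri. apply Tri; side. Qed.

Lemma lu_hc_hu : lu I2 = ch (cid I) (lu I).
Proof.
  pose proof (lu_nat D (lu I)) as N.
  rewrite ctgt_lu, cl_lu, csrc_lu, hsrc_u, cu_id in N.
  symmetry. apply (cv_retraction_cancel D _ _ (lu I) (lu_inv I)); try side.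
  rewrite lu_inv_lu, csrc_lu, hsrc_u. reflexivity.
Qed.

(* Kelly's argument: whisker by 1_I on the left, then compare the pentagon for (I, I, I, I)
   with the triangles and the naturality of the associator. *)
Lemma lu_hc_hu_assoc : cv (lu I2) (assoc I I I) = ch (lu I) (cid I).
Proof.
  assert (TriI2 : cv (ch (cid I) (lu I2)) (assoc I I I2) = ch (ru I) (cid I2)).
  { pose proof (triangle D I I2) as Tri. rewrite htgt_u in Tri. apply Tri; side. }
  assert (Pent : cv (assoc I I I2) (assoc I2 I I) =
    cv (ch (cid I) (assoc I I I)) (cv (assoc I I2 I) (ch (assoc I I I) (cid I))))
    by (apply pentagon; side).
  assert (NatR : cv (assoc I I I) (ch (ch (ru I) (cid I)) (cid I)) =
    cv (ch (ru I) (cid I2)) (assoc I2 I I)).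
  { pose proof (assoc_nat D (ru I) (cid I) (cid I)) as N.
    rewrite ctgt_ru, ctgt_cid, csrc_ru, csrc_cid, htgt_u, ch_cid in N by side.
    apply N; side. }
  assert (NatL : cv (assoc I I I) (ch (ch (cid I) (lu I)) (cid I)) =
    cv (ch (cid I) (ch (lu I) (cid I))) (assoc I I2 I)).
  { pose proof (assoc_nat D (cid I) (lu I) (cid I)) as N.
    rewrite ctgt_lu, ctgt_cid, csrc_lu, csrc_cid, hsrc_u in N.
    apply N; side. }
  apply ch_cid_hu_l_inj; try side.
  apply (cv_section_cancel D _ _ (cv (assoc I I2 I) (ch (assoc I I I) (cid I)))
           (cv (ch (assoc_inv I I I) (cid I)) (assoc_inv I I2 I))); try side.
  - rewrite <- cv_assoc by side. rewrite (cv_assoc D (assoc_inv I I2 I)) by side.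
    rewrite <- interchange by side. rewrite assoc_assoc_inv by side.
    rewrite cv_cid_cid, ch_cid, cv_cid_l by side. rewrite assoc_assoc_inv by side.
    f_equal; side.
  - rewrite ch_cv_r, ctgt_cid by side. rewrite <- cv_assoc by side.
    rewrite <- Pent, cv_assoc by side. rewrite TriI2, <- NatR, <- triangle_hu.
    rewrite ch_cv_l, ctgt_cid by side. rewrite cv_assoc by side. rewrite NatL.
    rewrite <- !cv_assoc by side. reflexivity.
Qed.

Lemma ch_lu_hu_cid : ch (lu I) (cid I) = cv (ch (cid I) (lu I)) (assoc I I I).
Proof. rewrite <- lu_hc_hu_assoc, lu_hc_hu. reflexivity. Qed.

Lemma lu_hu_ru_hu : lu I = ru I.
Proof.
  symmetry. apply ch_cid_hu_r_inj; try side.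
  rewrite <- triangle_hu, <- lu_hc_hu. apply lu_hc_hu_assoc.
Qed.

End UnitCoherence.

Section Pasting.
Variable D : DoubleCat.
Variable M : Ob D.

(* The composite of a : J => 1_M with a vertical cell V : l => k, as it appears in [left_kan]. *)
Definition paste (a V : Cell D) : Cell D := cv (hcomp_into_unit M a V) (ru_inv (csrc a)).

(* The composite of vertical cells V : l => g and W : g => k, for l, g, k : B -> M. *)
Definition vcell_comp (B : Ob D) (V W : Cell D) : Cell D :=
  cv (hcomp_into_unit M V W) (lu_inv (hu B)).

Lemma paste_shape (a V : Cell D) (J : Hm D) (d l k : Vm D) :
  cell_shape a J (hu M) d l -> cell_shape V (hu (htgt J)) (hu M) l k ->
  cell_shape (paste a V) J (hu M) d k.
Proof.
  intros (A1 & A2 & A3 & A4) (V1 & V2 & V3 & V4).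
  subst d l k. unfold paste, hcomp_into_unit; repeat split; side.
Qed.

Lemma vcell_comp_shape (B : Ob D) (V W : Cell D) (l g k : Vm D) :
  cell_shape V (hu B) (hu M) l g -> cell_shape W (hu B) (hu M) g k ->
  cell_shape (vcell_comp B V W) (hu B) (hu M) l k.
Proof.
  intros (V1 & V2 & V3 & V4) (W1 & W2 & W3 & W4).
  subst l g k. unfold vcell_comp, hcomp_into_unit; repeat split; side.
Qed.

Lemma paste_eq_of_hcomp_into_unit (a b V : Cell D) (J : Hm D) :
  csrc a = J -> csrc b = J -> cv a (ru J) = hcomp_into_unit M b V -> paste b V = a.
Proof.
  intros Ha Hb H. unfold paste. rewrite Hb, <- H, <- cv_assoc by side.
  rewrite ru_ru_inv. apply cv_cid_r, Ha.
Qed.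

Lemma paste_cu (a : Cell D) : ctgt a = hu M -> paste a (cu (cr a)) = a.
Proof.
  intros Ha. unfold paste, hcomp_into_unit. rewrite lu_hu_ru_hu, <- Ha, ru_nat.
  rewrite <- cv_assoc by side. rewrite ru_ru_inv, cv_id_r. reflexivity.
Qed.

Lemma paste_cv (a p V : Cell D) :
  ctgt p = csrc a -> cr a = cl V -> csrc V = hu (htgt (csrc a)) ->
  ctgt a = hu M -> ctgt V = hu M ->
  paste (cv a p) (cv V (cu (cr p))) = cv (paste a V) p.
Proof.
  intros H1 H2 H3 H4 H5. unfold paste, hcomp_into_unit. rewrite csrc_cv by side.
  rewrite interchange by side. rewrite <- !cv_assoc by side.
  rewrite ru_inv_nat, H1. reflexivity.
Qed.

Lemma paste_paste (B : Ob D) (a V W : Cell D) :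
  htgt (csrc a) = B -> ctgt a = hu M ->
  csrc V = hu B -> ctgt V = hu M -> csrc W = hu B -> ctgt W = hu M ->
  cr a = cl V -> cr V = cl W ->
  paste (paste a V) W = paste a (vcell_comp B V W).
Proof.
  intros HB Ha HV1 HV2 HW1 HW2 H1 H2. unfold paste at 1 2, hcomp_into_unit.
  rewrite csrc_cv, csrc_ru_inv by side.
  assert (HL : ch (cv (cv (lu (hu M)) (ch a V)) (ru_inv (csrc a))) W =
     cv (cv (ch (lu (hu M)) (cid (hu M))) (ch (ch a V) W)) (ch (ru_inv (csrc a)) (cid (hu B)))).
  { rewrite <- !interchange by side. rewrite (cv_cid_l D W), (cv_cid_r D W) by side.
    reflexivity. }
  assert (HR : ch a (vcell_comp B V W) =
     cv (cv (ch (cid (hu M)) (lu (hu M))) (ch a (ch V W))) (ch (cid (csrc a)) (lu_inv (hu B)))).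
  { unfold vcell_comp, hcomp_into_unit. rewrite <- !interchange by side.
    rewrite (cv_cid_l D a), (cv_cid_r D a) by side. reflexivity. }
  pose proof (assoc_nat D a V W ltac:(side) ltac:(side)) as N.
  rewrite Ha, HV1, HV2, HW1, HW2 in N.
  unfold paste, hcomp_into_unit. rewrite HL, HR, ch_lu_hu_cid.
  rewrite <- !cv_assoc by side.
  rewrite (cv_assoc D _ (ch (ch a V) W) (assoc (hu M) (hu M) (hu M))) by side.
  rewrite N, <- cv_assoc by side.
  rewrite (cv_assoc D _ (ch (ru_inv (csrc a)) (cid (hu B))) (assoc (csrc a) (hu B) (hu B)))
    by side.
  rewrite triangle_inv by side. reflexivity.
Qed.

Lemma vcell_comp_cv_cu (B : Ob D) (V W : Cell D) (k : Vm D) :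
  csrc V = hu B -> ctgt V = hu M -> csrc W = hu B -> ctgt W = hu M ->
  cr V = cl W -> vcod k = B ->
  vcell_comp (vdom k) (cv V (cu k)) (cv W (cu k)) = cv (vcell_comp B V W) (cu k).
Proof.
  intros HV1 HV2 HW1 HW2 HVW Hk. unfold vcell_comp, hcomp_into_unit.
  rewrite interchange by side. rewrite <- !cv_assoc by side.
  pose proof (lu_inv_nat D (cu k)) as N. rewrite cl_cu, csrc_cu, ctgt_cu, Hk in N.
  rewrite N, !cv_assoc by side. reflexivity.
Qed.

End Pasting.

Arguments paste {D}.
Arguments vcell_comp {D}.

Section KanRetract.
Variable D : DoubleCat.

Lemma left_kan_paste_id (d : Vm D) (J : Hm D) (l : Vm D) (eta V : Cell D) :
  left_kan d J l eta -> cell_shape V (hu (htgt J)) (hu (vcod d)) l l ->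
  paste (vcod d) eta V = eta -> V = cu l.
Proof.
  intros [(E1 & E2 & E3 & E4) Kan] HV Hpaste.
  assert (Hl : vdom l = htgt J) by (rewrite <- E4; side).
  assert (Hl' : vcod l = vcod d) by (rewrite <- E4; side).
  destruct (Kan l eta) as (n & _ & Uniq); [repeat split; assumption|].
  transitivity n; [symmetry|]; apply Uniq; split; try exact HV.
  - unfold paste in Hpaste. rewrite E1 in Hpaste. symmetry; exact Hpaste.
  - unfold cell_shape. rewrite csrc_cu, ctgt_cu, cl_cu, cr_cu, Hl, Hl'. repeat split.
  - rewrite <- E1. fold (paste (vcod d) eta (cu l)). rewrite <- E4, paste_cu; congruence.
Qed.

Lemma cartesian_of_retract (M : Ob D) (J : Hm D) (d l g : Vm D) (eta nu mu : Cell D) :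
  cell_shape eta J (hu M) d l ->
  cell_shape nu (hu (htgt J)) (hu M) l g ->
  cell_shape mu (hu (htgt J)) (hu M) g l ->
  vcell_comp M (htgt J) nu mu = cu l ->
  cartesian (paste M eta nu) -> cartesian eta.
Proof.
  intros Seta Snu Smu Hret Cphi.
  pose proof (paste_shape D M eta nu J d l g Seta Snu) as (P1 & P2 & P3 & P4).
  destruct Seta as (E1 & E2 & E3 & E4).
  destruct Snu as (N1 & N2 & N3 & N4).
  destruct Smu as (U1 & U2 & U3 & U4).
  set (phi := paste M eta nu) in *.
  subst d l g.
  assert (Heta : eta = paste M phi mu).
  { unfold phi. rewrite paste_paste with (B := htgt J) by side.
    rewrite Hret, paste_cu by side. reflexivity. }
  intros chi h k Hh Hk Hct Hcl Hcr.
  rewrite E2 in Hct. rewrite vdom_cl, E1 in Hh. rewrite vdom_cr, E1 in Hk.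
  assert (Hck : htgt (csrc chi) = vdom k) by (rewrite <- vdom_cr, Hcr; side).
  assert (Hch : hsrc (csrc chi) = vdom h) by (rewrite <- vdom_cl, Hcl; side).
  destruct (Cphi (paste M chi (cv nu (cu k))) h k) as (psi & ((S1 & S2 & S3 & S4) & Hpsi) & Uniq);
    try solve [side | unfold paste, hcomp_into_unit; side].
  exists psi. split.
  - split; [repeat split; unfold paste, hcomp_into_unit in S1; side|].
    rewrite Heta, <- paste_cv by side. rewrite Hpsi, S4.
    rewrite paste_paste with (B := vdom k) by side.
    rewrite vcell_comp_cv_cu with (B := htgt J) by side.
    rewrite Hret, <- cu_comp, <- Hcr by side. apply paste_cu, Hct.
  - intros psi' [(S1' & S2' & S3' & S4') Hpsi']. apply Uniq. split.
    + repeat split; unfold paste, hcomp_into_unit; side.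
    + unfold phi. rewrite <- S4', <- paste_cv by side. rewrite Hpsi', S4'. reflexivity.
Qed.

End KanRetract.

Theorem lemma6p4 (D : DoubleCat) (y : Vm D) (J : Hm D) (l : Vm D) (eta : Cell D) :
  yoneda_embedding y ->
  left_kan y J l eta ->
  cartesian eta /\ pointwise_left_kan y J l eta.
Proof.
  intros [Ycart Ypointwise] Kan.
  pose proof (proj1 Kan) as Seta. destruct (proj1 Kan) as (E1 & E2 & E3 & E4).
  assert (HJ : hsrc J = vdom y) by (rewrite <- E3, vdom_cl, E1; reflexivity).
  assert (Hl : vdom l = htgt J) by (rewrite <- E4, vdom_cr, E1; reflexivity).
  destruct (Ycart J HJ) as (g & phi & Sphi & Cphi).
  destruct (Ypointwise J g phi Sphi Cphi) as [_ Pphi].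
  destruct (proj2 Kan g phi Sphi) as (nu & (Snu & Hnu) & _).
  destruct (Pphi (hu (htgt J)) l (cv eta (ru J)) (hsrc_u D _)) as (mu & (Smu & Hmu) & _).
  { repeat split; side. }
  assert (Hphi : phi = paste (vcod y) eta nu) by (unfold paste; rewrite E1; exact Hnu).
  assert (Hmu_nu : vcell_comp (vcod y) (htgt J) nu mu = cu l).
  { apply (left_kan_paste_id D y J l eta); [exact Kan| |].
    - exact (vcell_comp_shape D (vcod y) (htgt J) nu mu l g l Snu Smu).
    - destruct Snu as (N1 & N2 & N3 & N4), Smu as (U1 & U2 & U3 & U4),
        Sphi as (P1 & P2 & P3 & P4).
      rewrite <- paste_paste, <- Hphi by side.
      exact (paste_eq_of_hcomp_into_unit D (vcod y) eta phi mu J E1 P1 Hmu). }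
  assert (Ceta : cartesian eta).
  { apply (cartesian_of_retract D (vcod y) J y l g eta nu mu); try assumption.
    rewrite <- Hphi; exact Cphi. }
  split; [exact Ceta | exact (Ypointwise J l eta Seta Ceta)].
Qed.
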